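(* For any $\beta_0\in(0,\pi)$ there exists a finite point set $P$ in the plane such that $\max_{\beta\in(0,\pi)}\operatorname{perim}(\mathcal{O}_\beta\mathcal{H}(P))\neq\operatorname{perim}(\mathcal{O}_{\beta_0}\mathcal{H}(P))$.
   Context: For $\beta\in(0,\pi)$, $\mathcal{O}_\beta$ is the pair of lines through the origin with slopes $0$ and $\tan\beta$. Given an apex $a$, every point is uniquely $a+s(1,0)+t(\cos\beta,\sin\beta)$; an $\mathcal{O}_\beta$-quadrant with apex $a$ is one of the four open sets of such points with $s>0,t>0$; $s<0,t>0$; $s>0,t<0$; or $s<0,t<0$. A quadrant is $P$-free if it contains no point of $P$, and the $\mathcal{O}_\beta$-hull $\mathcal{O}_\beta\mathcal{H}(P)$ is the plane minus the union of all $P$-free $\mathcal{O}_\beta$-quadrants. $\operatorname{perim}$ denotes the total length of the boundary of the set (each boundary segment counted once; in particular a finite set of points has perimeter $0$). *)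

From HB Require Import structures.
From mathcomp Require Import all_boot all_order all_algebra.
From mathcomp Require Import all_classical all_reals all_analysis.
Set Implicit Arguments. Unset Strict Implicit. Unset Printing Implicit Defensive.
Import Order.TTheory GRing.Theory Num.Theory.
Import numFieldNormedType.Exports.
Local Open Scope classical_set_scope.
Local Open Scope ring_scope.

Definition Oquadrant (R : realType) (beta : R) (a : R * R) (sg1 sg2 : bool)
  : set (R * R) :=
  [set p | exists s t : R,
     (if sg1 then 0 < s else s < 0) /\ (if sg2 then 0 < t else t < 0) /\
     p = (a.1 + s + t * cos beta, a.2 + t * sin beta)].

Definition Pfree (R : realType) (P : seq (R * R)) (Q : set (R * R)) : Prop :=
  forall p, p \in P -> ~ Q p.

Definition Ohull (R : realType) (beta : R) (P : seq (R * R)) : set (R * R) :=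
  ~` [set x | exists (a : R * R) (sg1 sg2 : bool),
         Pfree P (Oquadrant beta a sg1 sg2) /\ Oquadrant beta a sg1 sg2 x].

(* Euclidean distance and diameter (diam of the empty set is 0). *)
Definition edist (R : realType) (x y : R * R) : R :=
  Num.sqrt ((x.1 - y.1) ^+ 2 + (x.2 - y.2) ^+ 2).

Definition ediam (R : realType) (U : set (R * R)) : \bar R :=
  ereal_sup ([set 0%E] `|` [set (edist x y)%:E | x in U & y in U]).

(* One-dimensional Hausdorff measure (normalised so that segments get their length). *)
Definition hausdorff1_delta (R : realType) (delta : R) (A : set (R * R)) : \bar R :=
  ereal_inf [set (\sum_(i <oo) ediam (U i))%E | U in
     [set U : nat -> set (R * R) |
        A `<=` \bigcup_i U i /\ (forall i, (ediam (U i) <= delta%:E)%E)]].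

Definition hausdorff1 (R : realType) (A : set (R * R)) : \bar R :=
  ereal_sup [set hausdorff1_delta delta A | delta in [set d : R | 0 < d]].

Definition boundary (R : realType) (A : set (R * R)) : set (R * R) :=
  closure A `\` interior A.

Definition perim (R : realType) (A : set (R * R)) : \bar R :=
  hausdorff1 (boundary A).

From Pilot Require Import Defs.
From mathcomp Require Import all_boot all_order all_algebra all_classical all_reals all_analysis.
From mathcomp Require Import ring lra.
Set Implicit Arguments.
Unset Strict Implicit.
Import Order.TTheory GRing.Theory Num.Theory.
Import numFieldNormedType.Exports.
Local Open Scope classical_set_scope.
Local Open Scope ring_scope.

(* Take P = {0, (cos b1, sin b1)} with b1 = beta0 / 2. For beta <> b1 the two
   points differ in both O_beta-coordinates, so every third point is cut off by
   a P-free quadrant: the hull is P itself and has perimeter 0. For beta = b1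
   the segment between them has direction b1; it lies in the hull, has empty
   interior, and its projection onto the y-axis bounds the perimeter of the
   hull from below by sin b1 / 2 > 0. Hence b1 is a maximiser and beta0 is not. *)

Section Hausdorff1.
Variable R : realType.
Implicit Types (A B U : set (R * R)) (x y p : R * R).

Lemma ediam_ge0 U : (0 <= ediam U)%E.
Proof. by apply: le_ereal_sup_tmp; exists 0%E => //; left. Qed.

Lemma edist_le_ediam {U x y} : U x -> U y -> ((Defs.edist x y)%:E <= ediam U)%E.
Proof.
move=> Ux Uy; apply: le_ereal_sup_tmp; exists (Defs.edist x y)%:E => //.
by right; exists x => //; exists y.
Qed.

Lemma ediam_le0 U p : U `<=` [set p] -> (ediam U <= 0)%E.
Proof.
move=> Up; apply/ereal_supP => _ [-> //|[x Ux [y Uy <-]]].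
by rewrite (Up _ Ux) (Up _ Uy) /Defs.edist !subrr expr0n /= addr0 sqrtr0.
Qed.

Lemma normB2_le_edist x y : `|x.2 - y.2| <= Defs.edist x y.
Proof. by rewrite /Defs.edist -sqrtr_sqr ler_wsqrtr // lerDr sqr_ge0. Qed.

Lemma hausdorff1_finite_le0 A (s : seq (R * R)) : A `<=` [set` s] ->
  (hausdorff1 A <= 0)%E.
Proof.
move=> As; apply/ereal_supP => _ [delta delta_gt0 <-].
apply: ge_ereal_inf.
pose U i := if (i < size s)%N then [set nth (0, 0) s i] else set0.
have U_le0 i : (ediam (U i) <= 0)%E.
  apply: (@ediam_le0 _ (nth (0, 0) s i)); rewrite /U.
  by case: ifP => _ // ? [].
exists 0%E => //; exists U; last first.
  by apply: eseries0 => i _ _; apply/eqP; rewrite eq_le U_le0 ediam_ge0.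
split=> [x /As xs | i]; last by rewrite (le_trans (U_le0 i)) // lee_fin ltW.
by exists (index x s) => //; rewrite /U index_mem xs /= nth_index.
Qed.

Lemma perim_finite_le0 A (s : seq (R * R)) : A `<=` [set` s] -> (perim A <= 0)%E.
Proof.
move=> As; apply: (@hausdorff1_finite_le0 _ s) => x [clAx _].
have closed_s : closed [set` s].
  apply: (accessible_finite_set_closed.1 _ _ (finite_seq s)).
  exact/hausdorff_accessible/norm_hausdorff.
by rewrite (closure_id [set` s]).1 //; exact: closureS As _ clAx.
Qed.

(* A set of diameter d lies in a horizontal strip of width 2 d around any of
   its points; this is where the factor 1 / 2 comes from. *)
Lemma ediam_series_ge_proj2 B (U : nat -> set (R * R)) a b delta :
  a < b -> (forall t, a <= t <= b -> exists2 x, B x & x.2 = t) ->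
  B `<=` \bigcup_i U i -> (forall i, (ediam (U i) <= delta%:E)%E) ->
  (((b - a) / 2)%:E <= \sum_(i <oo) ediam (U i))%E.
Proof.
move=> ab Bab BU U_delta.
pose z i := xget ((0 : R), (0 : R)) (U i).
pose d i := fine (ediam (U i)).
have dE i : (d i)%:E = ediam (U i).
  rewrite /d fineK // ge0_fin_numE ?ediam_ge0 //.
  exact: le_lt_trans (U_delta i) (ltry _).
have d_ge0 i : 0 <= d i by rewrite -lee_fin dE ediam_ge0.
pose I i := [set` Interval (BLeft ((z i).2 - d i)) (BRight ((z i).2 + d i))].
have ab_sub_I : [set` Interval (BLeft a) (BRight b)] `<=` \bigcup_i I i.
  move=> t /=; rewrite in_itv /= => /Bab [x Bx <-].
  have [i _ Uix] := BU x Bx; exists i => //.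
  have Uiz : U i (z i) by apply: xgetPex; exists x.
  have := edist_le_ediam Uix Uiz; rewrite -dE lee_fin.
  move=> /(le_trans (normB2_le_edist _ _)).
  by rewrite ler_norml /I /= in_itv /= => /andP[? ?]; apply/andP; split; lra.
have := @measure_sigma_subadditive _ _ _ (@lebesgue_measure R) _ I
  (fun i => measurable_itv _) (measurable_itv _) ab_sub_I.
have ab_len : lebesgue_measure ([set` Interval (BLeft a) (BRight b)] : set R)
    = (b - a)%:E by rewrite lebesgue_measure_itv /= lte_fin ab -EFinD.
move=> ab_le; have {}ab_le : ((b - a)%:E <= \sum_(i <oo) lebesgue_measure (I i))%E.
  by rewrite -ab_len; exact: ab_le.
have I_le i : (lebesgue_measure (I i) <= 2%:E * ediam (U i))%E.
  rewrite /I lebesgue_measure_itv /= -dE -EFinM.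
  case: ifP => _; last by rewrite lee_fin mulr_ge0.
  by rewrite -EFinD lee_fin; lra.
have := le_trans ab_le (lee_nneseries (fun i _ _ => measure_ge0 _ _) (fun i _ => I_le i)).
rewrite nneseriesZl; last by move=> i _; exact: ediam_ge0.
have : (0 <= \sum_(i <oo) ediam (U i))%E by apply: nneseries_ge0 => i _ _; exact: ediam_ge0.
case: (\sum_(i <oo) ediam (U i))%E => [r||] //= r_ge0; last by rewrite leey.
by rewrite !lee_fin; lra.
Qed.

Lemma hausdorff1_ge_proj2 B a b :
  a < b -> (forall t, a <= t <= b -> exists2 x, B x & x.2 = t) ->
  (((b - a) / 2)%:E <= hausdorff1 B)%E.
Proof.
move=> ab Bab; apply: (@le_trans _ _ (hausdorff1_delta 1 B)).
  apply/ereal_infP => _ [U [BU U_le1] <-].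
  exact: ediam_series_ge_proj2 ab Bab BU U_le1.
apply: le_ereal_sup_tmp; exists (hausdorff1_delta 1 B) => //.
by exists 1 => //=; exact: ltr01.
Qed.

End Hausdorff1.

Section ObliqueCoordinates.
Variables (R : realType) (beta : R).
Implicit Types (P : seq (R * R)) (a p q x z : R * R).

(* [(oblique_s z, oblique_t z)] are the coordinates of [z] in the basis
   (1, 0), (cos beta, sin beta), in which O_beta-quadrants are sign conditions. *)
Definition oblique_s z : R := z.1 - z.2 * cos beta / sin beta.
Definition oblique_t z : R := z.2 / sin beta.

Definition has_sign (pos : bool) (w : R) : Prop := if pos then 0 < w else w < 0.

Definition oblique_quadrant (pos1 pos2 : bool) (c d : R) z : Prop :=
  has_sign pos1 (oblique_s z - c) /\ has_sign pos2 (oblique_t z - d).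

Lemma has_sign_sep {v w} : v != w ->
  exists pos c, has_sign pos (v - c) /\ ~ has_sign pos (w - c).
Proof.
move=> vw; exists (w < v), ((v + w) / 2); rewrite /has_sign.
by case: ltrgtP vw => // wv _; split; lra.
Qed.

Lemma interior_oblique_line c : [set x | oblique_s x = c]° = set0.
Proof.
apply/seteqP; split=> // x /[dup] /interior_subset /= sx /nbhs_ballP [e e_gt0 ball_line].
have ball_x : ball x e (x.1 + e / 2, x.2).
  split; last exact: ballxx.
  rewrite /ball /= opprD addrA subrr add0r normrN ger0_norm ?divr_ge0 ?ltW //.
  by rewrite ltr_pdivrMr // ltr_pMr // ltr1n.
have := ball_line _ ball_x; rewrite /= -sx /oblique_s /=.
by move: e_gt0 => /=; lra.
Qed.

Hypothesis sin_beta_neq0 : sin beta != 0.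

Lemma oblique_inj x y :
  oblique_s x = oblique_s y -> oblique_t x = oblique_t y -> x = y.
Proof.
case: x y => [x1 x2] [y1 y2]; rewrite /oblique_s /oblique_t /= => es et.
have e2 : x2 = y2 by rewrite -[x2](divfK sin_beta_neq0) et divfK.
by rewrite e2 in es *; move/addIr: es => ->.
Qed.

Lemma OquadrantE a pos1 pos2 z : Oquadrant beta a pos1 pos2 z <->
  oblique_quadrant pos1 pos2 (oblique_s a) (oblique_t a) z.
Proof.
rewrite /oblique_quadrant /oblique_s /oblique_t; split.
- move=> [s [t [hs [ht ->]]]] /=.
  have -> : a.1 + s + t * cos beta - (a.2 + t * sin beta) * cos beta / sin beta
      - (a.1 - a.2 * cos beta / sin beta) = s by field.
  by have -> : (a.2 + t * sin beta) / sin beta - a.2 / sin beta = t by field.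
- move=> [hs ht]; do 2 eexists; split; first exact: hs; split; first exact: ht.
  by case: z {hs ht} => z1 z2; case: a => a1 a2; congr pair => /=; field.
Qed.

Lemma OhullP P x : Ohull beta P x <->
  forall pos1 pos2 c d, oblique_quadrant pos1 pos2 c d x ->
    exists2 p, p \in P & oblique_quadrant pos1 pos2 c d p.
Proof.
pose apex c d : R * R := (c + d * cos beta, d * sin beta).
have apex_s c d : oblique_s (apex c d) = c by rewrite /oblique_s /=; field.
have apex_t c d : oblique_t (apex c d) = d by rewrite /oblique_t /=; field.
split=> [hx pos1 pos2 c d qx | hP].
- apply: contrapT => noP; apply: hx; exists (apex c d), pos1, pos2.
  rewrite OquadrantE apex_s apex_t; split=> // p pP.
  by rewrite OquadrantE apex_s apex_t => qp; apply: noP; exists p.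
- move=> [a [pos1 [pos2 [Pfree_a]]]]; rewrite OquadrantE => /hP [p pP].
  by rewrite -OquadrantE; exact: Pfree_a.
Qed.

Lemma Ohull_sub_line P c : (forall p, p \in P -> oblique_s p = c) ->
  Ohull beta P `<=` [set x | oblique_s x = c].
Proof.
move=> Pc x hx /=; apply/eqP; apply: contrapT => /negP sx_neq_c.
have [pos [c' [hx' hc']]] := has_sign_sep sx_neq_c.
have ht : has_sign true (oblique_t x - (oblique_t x - 1)) by rewrite /has_sign subKr ltr01.
have [p pP [hp _]] := (OhullP P x).1 hx pos true c' _ (conj hx' ht).
by rewrite Pc in hp.
Qed.

Lemma Ohull_segment P p q x : p \in P -> q \in P ->
  oblique_s p = oblique_s x -> oblique_s q = oblique_s x ->
  oblique_t p <= oblique_t x <= oblique_t q -> Ohull beta P x.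
Proof.
move=> pP qP sp sq /andP[tpx txq]; apply/OhullP => pos1 pos2 c d [hs ht].
rewrite /has_sign in ht; case: pos2 ht => ht.
- by exists q => //; split; rewrite ?sq // /has_sign; lra.
- by exists p => //; split; rewrite ?sp // /has_sign; lra.
Qed.

Lemma notin_Ohull_pair {P p q x} : {subset P <= [:: p; q]} ->
  oblique_s x != oblique_s p -> oblique_t x != oblique_t q -> ~ Ohull beta P x.
Proof.
move=> Ppq /has_sign_sep [pos1 [c [hxs hps]]] /has_sign_sep [pos2 [d [hxt hqt]]].
move=> /OhullP /(_ pos1 pos2 c d (conj hxs hxt)) [r /Ppq].
by rewrite !inE => /orP[] /eqP -> [].
Qed.

Lemma Ohull_pair_sub p q :
  oblique_s p != oblique_s q -> oblique_t p != oblique_t q ->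
  Ohull beta [:: p; q] `<=` [set` [:: p; q]].
Proof.
move=> spq tpq x hx; rewrite /= !inE; apply: contrapT.
move=> /negP; rewrite negb_or => /andP[xp xq].
have swap : {subset [:: p; q] <= [:: q; p]} by move=> r; rewrite !inE orbC.
have [sxp|sxp] := eqVneq (oblique_s x) (oblique_s p).
  apply: (notin_Ohull_pair swap _ _ hx); first by rewrite sxp.
  by apply: contra xp => /eqP txp; apply/eqP/oblique_inj.
have [txq|txq] := eqVneq (oblique_t x) (oblique_t q); last first.
  exact: (notin_Ohull_pair (fun r => id) sxp txq hx).
apply: (notin_Ohull_pair swap _ _ hx); last by rewrite txq eq_sym.
by apply: contra xq => /eqP sxq; apply/eqP/oblique_inj.
Qed.

End ObliqueCoordinates.

Section UnitPair.
Variable R : realType.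
Implicit Types beta b : R.

Definition unit_pair b : seq (R * R) := [:: (0, 0); (cos b, sin b)].

Lemma sin_neq0 (x : R) : - pi < x < pi -> x != 0 -> sin x != 0.
Proof.
move=> /andP[pi_x x_pi]; case: (ltrgtP x 0) => // [x_lt0|x_gt0] _.
  by rewrite -[x]opprK sinN oppr_eq0 gt_eqF // sin_gt0_pi // oppr_gt0 x_lt0 ltrNl.
by rewrite gt_eqF // sin_gt0_pi // x_gt0.
Qed.

Lemma oblique_s0 beta : oblique_s beta (0, 0) = 0.
Proof. by rewrite /oblique_s /= !mul0r subr0. Qed.

Lemma oblique_t0 beta : oblique_t beta (0, 0) = 0.
Proof. by rewrite /oblique_t /= mul0r. Qed.

Lemma oblique_s_unit beta b : sin beta != 0 ->
  oblique_s beta (cos b, sin b) = sin (beta - b) / sin beta.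
Proof. by move=> sb; rewrite /oblique_s sinD sinN cosN /=; field. Qed.

Lemma perim_Ohull_unit_pair_le0 beta b : 0 < beta < pi -> 0 < b < pi ->
  beta != b -> (perim (Ohull beta (unit_pair b)) <= 0)%E.
Proof.
move=> hbeta hb beta_neq_b.
have sbeta_gt0 := sin_gt0_pi hbeta; have sb_gt0 := sin_gt0_pi hb.
have sbeta_neq0 : sin beta != 0 by rewrite gt_eqF.
apply: perim_finite_le0; apply: Ohull_pair_sub => //.
  rewrite oblique_s0 oblique_s_unit // eq_sym mulf_neq0 ?invr_eq0 //.
  by apply: sin_neq0; rewrite ?subr_eq0 //; move: hbeta hb => /andP[? ?] /andP[? ?]; lra.
by rewrite oblique_t0 /oblique_t /= eq_sym gt_eqF ?divr_gt0.
Qed.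

Lemma perim_Ohull_unit_pair_ge b : 0 < b < pi ->
  ((sin b / 2)%:E <= perim (Ohull b (unit_pair b)))%E.
Proof.
move=> hb; have sb_gt0 := sin_gt0_pi hb; have sb_neq0 : sin b != 0 by rewrite gt_eqF.
have s_unit : oblique_s b (cos b, sin b) = 0.
  by rewrite oblique_s_unit // subrr sin0 mul0r.
have hull_line : Ohull b (unit_pair b) `<=` [set x | oblique_s b x = 0].
  by apply: Ohull_sub_line => // p; rewrite !inE => /orP[] /eqP ->; rewrite ?oblique_s0.
have hull_int : (Ohull b (unit_pair b))° = set0.
  by apply/seteqP; split=> // x /(interiorS hull_line); rewrite interior_oblique_line.
rewrite -[sin b]subr0; apply: hausdorff1_ge_proj2 => // t /andP[t_ge0 t_le].
pose l := t / sin b; exists (l * cos b, l * sin b); last by rewrite /= divfK.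
have hull_x : Ohull b (unit_pair b) (l * cos b, l * sin b).
  apply: (@Ohull_segment _ _ sb_neq0 _ (0, 0) (cos b, sin b)).
  - by rewrite !inE eqxx.
  - by rewrite !inE eqxx orbT.
  - by rewrite oblique_s0 /oblique_s /=; field.
  - by rewrite s_unit /oblique_s /=; field.
  rewrite oblique_t0 /oblique_t /= mulfK // divff //; apply/andP; split.
    exact: divr_ge0 t_ge0 (ltW sb_gt0).
  by rewrite ler_pdivrMr // mul1r.
by split; [exact: subset_closure | rewrite hull_int].
Qed.

End UnitPair.

Theorem lemma7 (R : realType) (beta0 : R) :
  0 < beta0 < pi ->
  exists P : seq (R * R),
    exists beta1 : R,
      [/\ 0 < beta1 < pi,
          (forall beta : R, 0 < beta < pi ->
             (perim (Ohull beta P) <= perim (Ohull beta1 P))%E)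
        & perim (Ohull beta1 P) <> perim (Ohull beta0 P)].
Proof.
move=> hbeta0; have /andP[beta0_gt0 beta0_lt_pi] := hbeta0.
pose b := beta0 / 2.
have hb : 0 < b < pi by apply/andP; split; rewrite /b; lra.
have perim_b_gt0 : (0 < perim (Ohull b (unit_pair b)))%E.
  apply: lt_le_trans (perim_Ohull_unit_pair_ge hb).
  by rewrite lte_fin divr_gt0 // sin_gt0_pi.
exists (unit_pair b), b; split=> // [beta hbeta|].
  have [->//|beta_neq_b] := eqVneq beta b.
  exact: le_trans (perim_Ohull_unit_pair_le0 hbeta hb beta_neq_b) (ltW perim_b_gt0).
have beta0_neq_b : beta0 != b by apply/eqP; rewrite /b; lra.
move=> perim_eq; have := perim_Ohull_unit_pair_le0 hbeta0 hb beta0_neq_b.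
by rewrite -perim_eq leNgt perim_b_gt0.
Qed.
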